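(* Let $G$ be a finite graph, $F$ a normal spanning forest of $G$, $x$ a vertex of $G$, and $B\subseteq\mathrm{Pred}_F(x)$. Let $p,d\in\mathbb{N}$. (a) If $|B|\ge p$ and there are $p$ distinct immediate successors $y$ of $x$ in $F$ with $B_F(y)=B\cup\{x\}$, then $K_{p,p}$ is a minor of $G$. (b) If $|B|<p$ and $\mathrm{Sep}(G,p)\le d$, then there are at most $d$ immediate successors $y$ of $x$ in $F$ with $B_F(y)=B\cup\{x\}$.
   Context: Graphs are finite, simple, undirected. A spanning forest $F$ of $G$ is a rooted forest on the vertex set of $G$ using edges of $G$, with edges oriented away from the roots; its tree-order is $x\preceq_F y$ iff some path from a root to $y$ contains $x$; immediate successors of $x$ are the children of $x$ in $F$. $F$ is normal if the two ends of every edge of $G$ are $\preceq_F$-comparable. $\mathrm{Pred}_F(x)=\{y: y\prec_F x\}$. $B_F(x)=\{v\prec_F x : \text{there is an edge }(u,v)\text{ of }G\text{ with }x\preceq_F u\}$. $\mathrm{Sep}(G,k)$ is the maximum over vertex sets $S$ with $|S|\le k$ of the number of connected components of $G-S$. *)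

From mathcomp Require Import all_boot.
Set Implicit Arguments. Unset Strict Implicit. Unset Printing Implicit Defensive.

Definition simple_graph (T : finType) (e : rel T) : Prop :=
  symmetric e /\ irreflexive e.

Definition induced (T : finType) (e : rel T) (A : {set T}) : rel T :=
  [rel u v | [&& e u v, u \in A & v \in A]].

Definition connected_in (T : finType) (e : rel T) (A : {set T}) : Prop :=
  forall u v, u \in A -> v \in A -> connect (induced e A) u v.

Definition minor (T : finType) (e : rel T) (U : finType) (h : rel U) : Prop :=
  exists f : U -> {set T},
    [/\ forall a, f a != set0,
        forall a b, a != b -> [disjoint f a & f b],
        forall a, connected_in e (f a) &
        forall a b, h a b -> exists u v, [/\ u \in f a, v \in f b & e u v]].

Definition Kpp_rel (p : nat) : rel ('I_p + 'I_p) :=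
  fun a b => match a, b with
             | inl _, inr _ | inr _, inl _ => true
             | _, _ => false
             end.

Definition ncomp_minus (T : finType) (e : rel T) (S : {set T}) : nat :=
  n_comp (induced e (~: S)) (mem (~: S)).

Definition Sep (T : finType) (e : rel T) (k : nat) : nat :=
  \max_(S : {set T} | #|S| <= k) ncomp_minus e S.

(* A rooted spanning forest, given by its parent map (None at roots).
   The forest uses edges of G, and is acyclic (every vertex reaches a root). *)
Definition parent_step (T : finType) (par : T -> option T) : rel T :=
  fun u w => par u == Some w.

Definition spanning_forest (T : finType) (e : rel T) (par : T -> option T) : Prop :=
  (forall x y, par x = Some y -> e y x) /\
  (forall x, exists n, iter n (fun o => obind par o) (Some x) = None).

(* Tree order: x <=_F y iff x lies on the root-to-y path, i.e. x is reached
   from y by following parent pointers (0 or more times). *)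
Definition tle (T : finType) (par : T -> option T) (x y : T) : bool :=
  connect (parent_step par) y x.

Definition tlt (T : finType) (par : T -> option T) (x y : T) : bool :=
  (x != y) && tle par x y.

Definition normal_forest (T : finType) (e : rel T) (par : T -> option T) : Prop :=
  spanning_forest e par /\
  (forall u v, e u v -> tle par u v || tle par v u).

Definition Pred (T : finType) (par : T -> option T) (x : T) : {set T} :=
  [set y | tlt par y x].

Definition BF (T : finType) (e : rel T) (par : T -> option T) (x : T) : {set T} :=
  [set v | tlt par v x && [exists u, tle par x u && e u v]].

From mathcomp Require Import all_boot.
Set Implicit Arguments. Unset Strict Implicit. Unset Printing Implicit Defensive.

(* Lemma 4.11.  Let S := B ∪ {x}, and call a child y of x attached when
   B_F(y) = S.  The proof rests on two facts about a normal spanning forest F.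

   Because every vertex reaches a root, the tree order is a
     partial order (antisymmetry via the height of a vertex); the ancestors
     of a vertex are pairwise comparable; distinct children of x have
     disjoint subtrees, and no child of x lies at or below an ancestor of x.
   - Graph.  The subtree of y induces a connected subgraph (forest edges are
     edges of G), and if B_F(y) ⊆ S then every path of G - S starting at y
     stays in the subtree of y (normality forces an edge leaving the subtree
     downwards to end in B_F(y)).

   (a) The subtrees of p attached children and p singletons of B are the
       branch sets of a K_{p,p} minor: every b in B lies in B_F(y), which
       yields an edge between the subtree of y and b.
   (b) Sending an attached child to its component of G - S is injective by
       the confinement property, so there are at most as many attached
       children as components of G - S, and |S| <= p bounds this by Sep(G,p). *)

Lemma connect_preserves (T : finType) (r : rel T) (P : pred T) u v :
  (forall a b, P a -> r a b -> P b) -> P u -> connect r u v -> P v.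
Proof.
move=> stepP Pu /connectP [s path_s ->].
elim: s u Pu path_s => //= w s IH u Pu /andP [ruw path_w].
exact: IH (stepP _ _ Pu ruw) path_w.
Qed.

Lemma connect_induced_in (T : finType) (e : rel T) (A : {set T}) u v :
  u \in A -> connect (induced e A) u v -> v \in A.
Proof. by apply: connect_preserves => a b _ /and3P []. Qed.

Lemma induced_sym (T : finType) (e : rel T) (A : {set T}) :
  symmetric e -> connect_sym (induced e A).
Proof.
move=> e_sym; apply: sym_connect_sym => u v.
by rewrite /induced /= e_sym; congr (_ && _); apply: andbC.
Qed.

Definition subtree (T : finType) (par : T -> option T) (y : T) : {set T} :=
  [set w | tle par y w].

Section TreeOrder.

Variables (T : finType) (par : T -> option T).

Lemma tle_refl x : tle par x x.
Proof. exact: connect0. Qed.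

Lemma tle_trans x y z : tle par x y -> tle par y z -> tle par x z.
Proof. by rewrite /tle => xy yz; apply: connect_trans yz xy. Qed.

Lemma parent_tle x y : par y = Some x -> tle par x y.
Proof. by move=> pyx; apply: connect1; rewrite /parent_step pyx. Qed.

Lemma tle_parent w u z :
  tle par w u -> par u = Some z -> w = u \/ tle par w z.
Proof.
move=> /connectP [[|z' s] /= path_s ->] puz; first by left.
case/andP: path_s => /eqP; rewrite puz => -[<-] path_z; right.
by apply/connectP; exists s.
Qed.

Lemma ancestors_comparable u a b :
  tle par a u -> tle par b u -> tle par a b \/ tle par b a.
Proof.
move=> /connectP [s path_s ->]; elim: s u path_s => [|z s IH] u /=.
  by move=> _ bu; right.
case/andP => /eqP puz path_z bu.
case: (tle_parent bu puz) => [->|bz]; last exact: IH path_z bz.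
left; apply/connectP; exists (z :: s) => //=.
by rewrite path_z andbT; apply/eqP.
Qed.

Hypothesis rooted :
  forall x, exists n, iter n (fun o => obind par o) (Some x) = None.

Lemma rooted_exP u :
  exists n, iter n (fun o => obind par o) (Some u) == None.
Proof. by case: (rooted u) => n un; exists n; apply/eqP. Qed.

Definition height (u : T) : nat := ex_minn (rooted_exP u).

Lemma height_parent u w : par u = Some w -> height w < height u.
Proof.
move=> puw; rewrite /height.
case: ex_minnP => m _ min_m; case: ex_minnP => [[|m'] //= iter_m' _].
by rewrite ltnS; apply: min_m; move: iter_m'; rewrite -iterS iterSr /= puw.
Qed.

Lemma tle_height a b : tle par a b -> a = b \/ height a < height b.
Proof.
rewrite /tle => /connectP [s path_s ->].
elim: s b path_s => [|z s IH] b /=; first by left.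
case/andP => /eqP pbz path_z; right.
case: (IH z path_z) => [->|]; first exact: height_parent.
by move/ltn_trans; apply; apply: height_parent.
Qed.

Lemma tle_anti a b : tle par a b -> tle par b a -> a = b.
Proof.
move=> ab ba; case: (tle_height ab) => // lt_ab; case: (tle_height ba) => //.
by move/(ltn_trans lt_ab); rewrite ltnn.
Qed.

Lemma child_not_below y x b :
  par y = Some x -> tle par y b -> tle par b x -> False.
Proof.
move=> pyx yb bx; have yx := tle_anti (tle_trans yb bx) (parent_tle pyx).
by move: (height_parent pyx); rewrite yx ltnn.
Qed.

Lemma children_incomparable x y1 y2 :
  par y1 = Some x -> par y2 = Some x -> tle par y1 y2 -> y1 = y2.
Proof.
move=> py1 py2 y12; case: (tle_parent y12 py2) => [//|y1x].
by case: (child_not_below py1 (tle_refl y1) y1x).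
Qed.

Lemma subtrees_disjoint x y1 y2 :
  par y1 = Some x -> par y2 = Some x -> y1 != y2 ->
  [disjoint subtree par y1 & subtree par y2].
Proof.
move=> py1 py2 ne12; rewrite disjoint_subset; apply/subsetP => u.
rewrite !inE => y1u; apply/negP => y2u.
by case: (ancestors_comparable y1u y2u) => [/(children_incomparable py1 py2)
  | /(children_incomparable py2 py1)] eq12; rewrite eq12 eqxx in ne12.
Qed.

End TreeOrder.

Section ForestInGraph.

Variables (T : finType) (e : rel T) (par : T -> option T).
Hypothesis e_sym : symmetric e.
Hypothesis forest_edges : forall u w, par u = Some w -> e w u.

Lemma subtree_connected y : connected_in e (subtree par y).
Proof.
have to_root u : tle par y u -> connect (induced e (subtree par y)) u y.
  rewrite /tle => /connectP [s path_s ->].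
  elim: s u path_s => [|z s IH] u /=; first by move=> _; apply: connect0.
  case/andP => /eqP puz path_z; apply: connect_trans (IH _ path_z).
  apply: connect1; rewrite /induced /subtree /= !inE e_sym (forest_edges puz) /=.
  by apply/andP; split; apply/connectP; [exists (z :: s) | exists s];
     rewrite //= path_z andbT /parent_step puz.
move=> u v; rewrite !inE => yu yv; apply: connect_trans (to_root _ yu) _.
by rewrite induced_sym //; apply: to_root.
Qed.

Hypothesis normal : forall u v, e u v -> tle par u v || tle par v u.

(* If B_F(y) ⊆ S, paths of G - S starting at y stay in the subtree of y:
   an edge ab with a in the subtree and b above y would put b in B_F(y). *)
Lemma subtree_traps_paths (S : {set T}) y v :
  BF e par y \subset S -> connect (induced e (~: S)) y v -> tle par y v.
Proof.
move=> BFyS; apply: connect_preserves (tle_refl _ _) => a b ya.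
case/and3P => eab _; rewrite inE => bS.
case/orP: (normal eab) => [ab|ba]; first exact: tle_trans ya ab.
case: (ancestors_comparable ya ba) => [yb|]; first exact: yb.
case: (eqVneq b y) => [-> _|nby by_]; first exact: tle_refl.
have : b \in BF e par y by rewrite inE /tlt nby by_; apply/existsP; exists a; rewrite ya.
by move/(subsetP BFyS); rewrite (negbTE bS).
Qed.

End ForestInGraph.

Lemma Kpp_minor (T : finType) (e : rel T) (p : nat) (X Y : 'I_p -> {set T}) :
  symmetric e ->
  (forall i, X i != set0) -> (forall j, Y j != set0) ->
  (forall i, connected_in e (X i)) -> (forall j, connected_in e (Y j)) ->
  (forall i i', i != i' -> [disjoint X i & X i']) ->
  (forall j j', j != j' -> [disjoint Y j & Y j']) ->
  (forall i j, [disjoint X i & Y j]) ->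
  (forall i j, exists u v, [/\ u \in X i, v \in Y j & e u v]) ->
  minor e (@Kpp_rel p).
Proof.
move=> e_sym X0 Y0 Xconn Yconn Xdis Ydis XYdis XYedge.
exists (fun a => match a with inl i => X i | inr j => Y j end).
split=> [[i|j]|[i|j] [i'|j'] ne|[i|j]|[i|j] [i'|j'] //= _] //.
- by apply: Xdis; apply: contraNneq ne => ->.
- by rewrite disjoint_sym.
- by apply: Ydis; apply: contraNneq ne => ->.
- have [u [v [Xu Yv euv]]] := XYedge i' j.
  by exists v, u; rewrite e_sym.
Qed.

Lemma attached_children_Kpp (T : finType) (e : rel T) (par : T -> option T)
    (x : T) (B Y : {set T}) (p : nat) :
  simple_graph e -> normal_forest e par -> B \subset Pred par x ->
  p <= #|B| -> #|Y| = p ->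
  (forall y, y \in Y -> par y = Some x /\ BF e par y = B :|: [set x]) ->
  minor e (@Kpp_rel p).
Proof.
move=> [e_sym _] [[forest_edges rooted] _] BxPred pB cardY attached.
pose y i := @enum_val _ (mem Y) (cast_ord (esym cardY) i).
pose b j := @enum_val _ (mem B) (widen_ord pB j).
have y_attached i := attached (y i) (enum_valP (cast_ord (esym cardY) i)).
have par_y i : par (y i) = Some x by case: (y_attached i).
have BF_y i : BF e par (y i) = B :|: [set x] by case: (y_attached i).
have y_inj : injective y by move=> i i' /enum_val_inj /cast_ord_inj.
have b_inj : injective b by move=> j j' /enum_val_inj /(congr1 val) /= /val_inj.
have b_below j : tle par (b j) x.
  by have := subsetP BxPred _ (enum_valP (widen_ord pB j)); rewrite inE => /andP [].
apply: (@Kpp_minor _ _ _ (fun i => subtree par (y i)) (fun j => [set b j])) => //.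
- by move=> i; apply/set0Pn; exists (y i); rewrite inE tle_refl.
- by move=> j; apply/set0Pn; exists (b j); rewrite set11.
- by move=> i; apply: subtree_connected.
- by move=> j u v; rewrite !inE => /eqP -> /eqP ->.
- move=> i i' ne; apply: subtrees_disjoint (par_y i) (par_y i') _ => //.
  by apply: contraNneq ne => /y_inj ->.
- by move=> j j' ne; rewrite disjoints1 inE; apply: contraNneq ne => /b_inj ->.
- move=> i j; rewrite disjoint_sym disjoints1 inE; apply/negP => yb.
  exact: child_not_below (par_y i) yb (b_below j).
- move=> i j; have : b j \in BF e par (y i) by rewrite BF_y inE enum_valP.
  rewrite inE => /andP [_ /existsP [u /andP [yu euv]]].
  by exists u, (b j); rewrite !inE yu eqxx euv.
Qed.

Lemma attached_children_ncomp (T : finType) (e : rel T) (par : T -> option T)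
    (x : T) (S : {set T}) :
  simple_graph e -> normal_forest e par -> S \subset [set w | tle par w x] ->
  #|[set y | (par y == Some x) && (BF e par y \subset S)]| <= ncomp_minus e S.
Proof.
move=> [e_sym _] [[_ rooted] normal] S_below.
set Ys := [set y | _]; set comp := root (induced e (~: S)).
have attached y : y \in Ys -> par y = Some x /\ BF e par y \subset S.
  by rewrite inE => /andP [/eqP -> ->].
have notin_S y : y \in Ys -> y \in ~: S.
  move=> /attached [pyx _]; rewrite inE; apply/negP => /(subsetP S_below).
  by rewrite inE; apply: child_not_below pyx (tle_refl _ _).
have comp_sym := @induced_sym _ e (~: S) e_sym.
rewrite /ncomp_minus -(@card_in_imset _ _ comp Ys).
  apply: subset_leq_card; apply/subsetP => _ /imsetP [y Ys_y ->].
  rewrite inE /= (roots_root comp_sym) /=.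
  exact: connect_induced_in (notin_S _ Ys_y) (connect_root _ y).
move=> y1 y2 Ys1 Ys2 /(rootP comp_sym) y12.
have [py1 BFy1] := attached _ Ys1; have [py2 _] := attached _ Ys2.
exact: children_incomparable py1 py2 (subtree_traps_paths normal BFy1 y12).
Qed.

Unset Implicit Arguments.

Theorem lemma4p11 (T : finType) (e : rel T) (par : T -> option T)
  (x : T) (B : {set T}) (p d : nat) :
  simple_graph e -> normal_forest e par -> B \subset Pred par x ->
  ((p <= #|B| ->
    (exists Y : {set T}, #|Y| = p /\
       forall y, y \in Y -> par y = Some x /\ BF e par y = B :|: [set x]) ->
    minor e (@Kpp_rel p))
  /\
  (#|B| < p -> Sep e p <= d ->
    #|[set y | (par y == Some x) && (BF e par y == B :|: [set x])]| <= d)).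
Proof.
move=> G F BxPred; split.
  by move=> pB [Y [cardY attached]]; apply: attached_children_Kpp cardY attached.
move=> Bp Sep_d; set S := B :|: [set x].
have cardS : #|S| <= p.
  by apply: leq_trans (leq_card_setU _ _).1 _; rewrite cards1 addn1.
have S_below : S \subset [set w | tle par w x].
  apply/subsetP => w; rewrite !inE => /orP [/(subsetP BxPred)|/eqP ->].
    by rewrite inE => /andP [].
  exact: tle_refl.
apply: leq_trans Sep_d; apply: leq_trans (leq_bigmax_cond S cardS).
apply: leq_trans (attached_children_ncomp G F S_below).
apply/subset_leq_card/subsetP => y; rewrite !inE => /andP [-> /eqP ->].
exact: subxx.
Qed.
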